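(* Suppose either $R=0$, or $X$ and $Y$ are independent under $P_{XY}$ (i.e. $P_{XY}=P_XP_Y$). Then $$\sup_{Q_Y}\ \inf_{Q_{U\mid Y}:\ I(Q_{Y;U})\le R}\ \sup_{Q_{X\mid YU}}\Big(\rho\, R_D(Q_{X\mid U})-D\big(Q_{XYU}\,\|\,P_{XY}Q_{U\mid Y}\big)\Big) =\sup_{Q_X}\Big(\rho\,R_D(Q_X)-D(Q_X\|P_X)\Big),$$ where $R_D(Q_X)=\min_{Q_{\hat X\mid X}:\ \mathbb{E}[d(X,\hat X)]\le D} I(X;\hat X)$ is the (unconditional) rate–distortion function of $Q_X$.
   Context: $\mathcal{X},\mathcal{Y},\hat{\mathcal{X}}$ are finite sets, $P_{XY}$ is a PMF on $\mathcal{X}\times\mathcal{Y}$ with $X$-marginal $P_X$ and $Y$-marginal $P_Y$, $d\colon\mathcal{X}\times\hat{\mathcal{X}}\to\mathbb{R}_{\ge0}$, $D>0$, $R\ge0$, $\rho>0$. The optimization on the left is over $Q_Y\in\mathcal{P}(\mathcal{Y})$, a finite set $\mathcal{U}$, $Q_{U\mid Y}\in\mathcal{P}(\mathcal{U}\mid\mathcal{Y})$, $Q_{X\mid YU}\in\mathcal{P}(\mathcal{X}\mid\mathcal{Y}\times\mathcal{U})$ with quantities evaluated under $Q_{XYU}=Q_YQ_{U\mid Y}Q_{X\mid YU}$; on the right over $Q_X\in\mathcal{P}(\mathcal{X})$. $R_D(Q_{X\mid U})=\min_{Q_{\hat X\mid XU}:\ \mathbb{E}[d(X,\hat X)]\le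 D} I(X;\hat X\mid U)$ evaluated under $Q_{\hat X\mid XU}Q_{XU}$. $P_{XY}Q_{U\mid Y}$ denotes $(x,y,u)\mapsto P_{XY}(x,y)Q_{U\mid Y}(u\mid y)$. Logarithms are base 2. *)

From HB Require Import structures.
From mathcomp Require Import all_boot all_order all_algebra.
From mathcomp Require Import all_classical all_reals all_analysis.
Set Implicit Arguments. Unset Strict Implicit. Unset Printing Implicit Defensive.
Import Order.TTheory GRing.Theory Num.Theory.
Local Open Scope ring_scope.
Local Open Scope classical_set_scope.

Section InfoDefs.
Variable R : realType.

Definition log2 (x : R) : R := ln x / ln 2.

Definition is_pmf (T : finType) (p : T -> R) : Prop :=
  (forall t, 0 <= p t) /\ \sum_t p t = 1.

(* a conditional PMF W : A -> B -> R, W a b = W(b | a) *)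
Definition is_cpmf (A B : finType) (W : A -> B -> R) : Prop :=
  forall a, is_pmf (W a).

(* Kullback-Leibler divergence (base 2), +oo if q is not << p;
   convention 0 log 0 = 0 *)
Definition KL (T : finType) (q p : T -> R) : \bar R :=
  if [forall t, (p t == 0) ==> (q t == 0)]
  then (\sum_(t | 0 < q t) q t * log2 (q t / p t))%:E
  else +oo%E.

Definition MI (A B : finType) (p : A * B -> R) : R :=
  \sum_(ab | 0 < p ab)
     p ab * log2 (p ab / ((\sum_b' p (ab.1, b')) * (\sum_a' p (a', ab.2)))).

Definition CMI (A B C : finType) (p : A * B * C -> R) : R :=
  \sum_(abc | 0 < p abc)
     p abc * log2 ((p abc * (\sum_a' \sum_b' p (a', b', abc.2)))
                   / ((\sum_b' p (abc.1.1, b', abc.2))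
                      * (\sum_a' p (a', abc.1.2, abc.2)))).

(* unconditional rate-distortion function R_D(Q_X)
   (min over an empty feasible set is +oo; the min, when the feasible
   set is nonempty, is attained, so it equals the infimum) *)
Definition RD (X Xh : finType) (d : X -> Xh -> R) (D : R) (QX : X -> R)
  : \bar R :=
  ereal_inf [set (MI (fun xxh : X * Xh => QX xxh.1 * W xxh.1 xxh.2))%:E
            | W in [set W : X -> Xh -> R | is_cpmf W /\
                 \sum_x \sum_xh QX x * W x xh * d x xh <= D]].

Definition RDc (X Xh U : finType) (d : X -> Xh -> R) (D : R) (QXU : X * U -> R)
  : \bar R :=
  ereal_inf [set (CMI (fun t : X * Xh * U =>
                      QXU (t.1.1, t.2) * W (t.1.1, t.2) t.1.2))%:E
            | W in [set W : X * U -> Xh -> R | is_cpmf W /\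
                 \sum_x \sum_u \sum_xh QXU (x, u) * W (x, u) xh * d x xh <= D]].

End InfoDefs.

From HB Require Import structures.
From mathcomp Require Import all_boot all_order all_algebra.
From mathcomp Require Import all_classical all_reals all_analysis.
From mathcomp Require Import ring lra.
Import Order.TTheory GRing.Theory Num.Theory.
Local Open Scope ring_scope.
Local Open Scope classical_set_scope.
Set Implicit Arguments. Unset Strict Implicit.

(* LHS <= RHS.  For every Q_Y the trivial auxiliary variable U = unit is
   admissible, since a constant channel carries no information.  For it, the
   conditional rate-distortion term equals R_D of the induced source law
   Q_X = sum_y Q_Y(y) Q_{X|YU}(.|y,tt) (RDc_prod_input), and the divergence
   can only decrease when Y is marginalised out (KL_channel, KL_marg).

   RHS <= LHS.  If Q_X is not absolutely continuous with respect to P_X its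
   term is -oo.  Otherwise put Q_{XY} = Q_X P_{Y|X}, take its Y-marginal as
   Q_Y and its backward channel as Q_{X|YU}.  For any admissible Q_{U|Y} the
   law of (X, U) then factorises -- by the equality case of Gibbs' inequality
   when I(Y;U) = 0, directly when P_{XY} = P_X P_Y -- and the objective equals
   the single-letter quantity of Q_X (objective_construction). *)

Section Inequalities.
Variable R : realType.

Lemma sum_gt0_term (T : finType) (F : T -> R) (t0 : T) :
  (forall t, 0 <= F t) -> 0 < F t0 -> 0 < \sum_t F t.
Proof.
by move=> F0 Ft0; apply: lt_le_trans Ft0 _; rewrite (bigD1 t0) //= lerDl sumr_ge0.
Qed.

Lemma mul_gt0_factors (a b : R) : 0 <= a -> 0 <= b -> 0 < a * b -> 0 < a /\ 0 < b.
Proof.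
move=> a0 b0 ab; split; rewrite lt_def ?a0 ?b0 andbT; apply: contraTneq ab => ->;
  by rewrite ?mul0r ?mulr0 ltxx.
Qed.

Lemma ln2_gt0 : 0 < ln (2 : R).
Proof. by apply: ln_gt0; rewrite ltr1n. Qed.

Lemma sum_log2 (T : finType) (f g : T -> R) :
  \sum_t f t * log2 (g t) = (\sum_t f t * ln (g t)) / ln 2.
Proof. by rewrite mulr_suml; apply: eq_bigr => t _; rewrite /log2 mulrA. Qed.

Lemma ln_le_sub1 (x : R) : 0 < x -> ln x <= x - 1.
Proof.
by move=> x0; have := @le_ln1Dx R (x - 1); rewrite [1 + _]addrC subrK; apply; lra.
Qed.

Lemma ln_lt_sub1 (x : R) : 0 < x -> x != 1 -> ln x < x - 1.
Proof.
move=> x0 x1; have := @expR_gt1Dx R (ln x); rewrite lnK ?posrE // ln_eq0 // x1.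
by move=> /(_ isT); lra.
Qed.

Lemma xlnx_div_ge (a b : R) : 0 <= a -> 0 < b -> a - b <= a * ln (a / b).
Proof.
move=> a0 b0; have [->|an0] := eqVneq a 0; first by rewrite mul0r; lra.
have ap : 0 < a by rewrite lt_def an0.
have := ln_le_sub1 (divr_gt0 b0 ap).
have e : a * (b / a) = b by rewrite mulrC divfK.
rewrite -[a / b]invf_div lnV ?posrE ?divr_gt0 //; nra.
Qed.

Lemma xlnx_div_eq (a b : R) :
  0 <= a -> 0 < b -> a * ln (a / b) = a - b -> a = b.
Proof.
move=> a0 b0; have [->|an0] := eqVneq a 0; first by rewrite mul0r; lra.
move=> eq_ab.
have ap : 0 < a by rewrite lt_def an0.
have [//|neq_ab] := eqVneq a b.
have ba1 : b / a != 1.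
  by apply: contra neq_ab => /eqP h; rewrite -[b](divfK an0) h mul1r.
have := ln_lt_sub1 (divr_gt0 b0 ap) ba1.
have e : a * (b / a) = b by rewrite mulrC divfK.
move: eq_ab; rewrite -[a / b]invf_div lnV ?posrE ?divr_gt0 //; nra.
Qed.

Lemma log_sum (I : finType) (a b : I -> R) :
  (forall i, 0 <= a i) -> (forall i, 0 <= b i) -> (forall i, 0 < a i -> 0 < b i) ->
  (\sum_i a i) * log2 ((\sum_i a i) / (\sum_i b i)) <= \sum_i a i * log2 (a i / b i).
Proof.
move=> a0 b0 ab; set A := \sum_i a i; set B := \sum_i b i.
rewrite sum_log2 /log2 mulrA ler_pM2r ?invr_gt0 ?ln2_gt0 //.
have [A0|An0] := eqVneq A 0.
  rewrite A0 mul0r big1 // => i _.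
  by rewrite (psumr_eq0P (fun i _ => a0 i) A0) ?mul0r.
have /existsP [i0 ai0] : [exists i, 0 < a i].
  apply: contraNT An0 => /existsPn Hn; apply/eqP/big1 => i _.
  by apply/eqP; rewrite eq_le a0 andbT leNgt Hn.
have Bp : 0 < B := @sum_gt0_term _ b i0 b0 (ab _ ai0).
have Ap : 0 < A by rewrite lt_def An0 sumr_ge0.
have key i : a i - b i * (A / B) <= a i * ln (a i / b i) - a i * ln (A / B).
  have [->|ain0] := eqVneq (a i) 0.
    by rewrite !mul0r subrr sub0r oppr_le0 mulr_ge0 // divr_ge0 // ltW.
  have aip : 0 < a i by rewrite lt_def ain0 a0.
  have bip := ab _ aip.
  rewrite -mulrBr -ln_div ?posrE ?divr_gt0 //.
  have -> : a i / b i / (A / B) = a i / (b i * (A / B)).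
    by field; rewrite !lt0r_neq0.
  by apply: xlnx_div_ge => //; rewrite mulr_gt0 ?divr_gt0.
rewrite -subr_ge0 mulr_suml -sumrB; apply: le_trans (ler_sum _ (fun i _ => key i)).
by rewrite sumrB -mulr_suml -/A -/B mulrCA divff ?mulr1 ?subrr // lt0r_neq0.
Qed.

Lemma log_sum_mix (U : finType) (V x y : U -> R) :
  (forall u, 0 <= V u) -> (forall u, 0 <= x u) -> (forall u, 0 <= y u) ->
  (forall u, 0 < x u -> 0 < y u) ->
  (\sum_u V u * x u) * log2 ((\sum_u V u * x u) / (\sum_u V u * y u))
  <= \sum_u V u * (x u * log2 (x u / y u)).
Proof.
move=> V0 x0 y0 xy.
have weighted_term u : V u * x u * log2 (V u * x u / (V u * y u))
                       = V u * (x u * log2 (x u / y u)).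
  have [->|Vn0] := eqVneq (V u) 0; first by rewrite !mul0r.
  have [->|xn0] := eqVneq (x u) 0; first by rewrite !(mulr0, mul0r).
  have yn0 : y u != 0 by rewrite lt0r_neq0 // xy // lt_def xn0 x0.
  by rewrite -mulrA; congr (_ * (_ * log2 _)); field; rewrite Vn0 yn0.
rewrite -(eq_bigr _ (fun u _ => weighted_term u)).
apply: log_sum => [u|u|u /(mul_gt0_factors (V0 u) (x0 u)) [Vpos xpos]].
- exact: mulr_ge0.
- exact: mulr_ge0.
- by rewrite mulr_gt0 ?xy.
Qed.

Lemma gibbs_eq (T : finType) (p q : T -> R) :
  is_pmf p -> is_pmf q -> (forall t, 0 < p t -> 0 < q t) ->
  \sum_t p t * log2 (p t / q t) <= 0 -> p =1 q.
Proof.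
move=> [p0 p1] [q0 q1] pq; rewrite sum_log2 ler_pdivrMr ?ln2_gt0 // mul0r => div_le0.
pose f t := p t * ln (p t / q t) - (p t - q t).
have f0 t : 0 <= f t.
  rewrite /f subr_ge0; have [->|pn] := eqVneq (p t) 0.
    by rewrite mul0r sub0r oppr_le0.
  by apply: xlnx_div_ge => //; apply: pq; rewrite lt_def pn p0.
have sf : \sum_t f t = 0.
  apply/eqP; rewrite eq_le sumr_ge0 ?andbT; last by move=> t _.
  by rewrite /f sumrB sumrB p1 q1 subrr subr0; exact: div_le0.
move=> t; have := @psumr_eq0P _ _ xpredT f (fun t _ => f0 t) sf t isT.
rewrite /f; have [pt0|pn] := eqVneq (p t) 0.
  by rewrite pt0 mul0r !sub0r opprK => ->.
move=> /eqP; rewrite subr_eq0 => /eqP.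
by apply: xlnx_div_eq; [exact: p0 | apply: pq; rewrite lt_def pn p0].
Qed.
End Inequalities.

Section Information.
Variable R : realType.

Lemma sum_pair (A B : finType) (F : A * B -> R) :
  \sum_t F t = \sum_a \sum_b F (a, b).
Proof. by rewrite pair_bigA; apply: eq_bigr => -[]. Qed.

Lemma sum_unit (F : unit -> R) : \sum_u F u = F tt.
Proof. by rewrite (big_pred1 tt) // => -[]. Qed.

Lemma unit_pmf : is_pmf (fun _ : unit => 1 : R).
Proof. by split => [_|]; rewrite ?sum_unit. Qed.

Lemma sum_support (T : finType) (p g : T -> R) :
  (forall t, 0 <= p t) -> \sum_(t | 0 < p t) p t * g t = \sum_t p t * g t.
Proof.
move=> p0; rewrite big_mkcond /=; apply: eq_bigr => t _.
by case: ifPn => // /negbTE; rewrite lt_def p0 andbT => /negbFE/eqP ->; rewrite mul0r.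
Qed.

Lemma MI_eq (A B : finType) (p : A * B -> R) (pA : A -> R) (pB : B -> R) :
  (forall ab, 0 <= p ab) -> (forall a, \sum_b p (a, b) = pA a) ->
  (forall b, \sum_a p (a, b) = pB b) ->
  MI p = \sum_ab p ab * log2 (p ab / (pA ab.1 * pB ab.2)).
Proof.
by move=> p0 hA hB; rewrite /MI sum_support //; apply: eq_bigr => ab _; rewrite hA hB.
Qed.

Lemma CMI_eq (A B C : finType) (p : A * B * C -> R) (pC : C -> R)
  (pAC : A -> C -> R) (pBC : B -> C -> R) :
  (forall t, 0 <= p t) -> (forall c, \sum_a \sum_b p (a, b, c) = pC c) ->
  (forall a c, \sum_b p (a, b, c) = pAC a c) ->
  (forall b c, \sum_a p (a, b, c) = pBC b c) ->
  CMI p = \sum_t p t * log2 ((p t * pC t.2) / (pAC t.1.1 t.2 * pBC t.1.2 t.2)).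
Proof.
move=> p0 hC hAC hBC; rewrite /CMI sum_support //.
by apply: eq_bigr => t _; rewrite hC hAC hBC.
Qed.

Lemma KL_eq (T : finType) (q p : T -> R) :
  (forall t, 0 <= q t) -> (forall t, p t = 0 -> q t = 0) ->
  KL q p = (\sum_t q t * log2 (q t / p t))%:E.
Proof.
move=> q0 qp; rewrite /KL ifT ?sum_support //.
by apply/forallP => t; apply/implyP => /eqP /qp ->.
Qed.

Lemma output_pmf (A B : finType) (QA : A -> R) (W : A -> B -> R) :
  is_pmf QA -> is_cpmf W -> is_pmf (fun b => \sum_a QA a * W a b).
Proof.
move=> [q0 q1] hW; split.
  by move=> b; apply: sumr_ge0 => a _; apply: mulr_ge0 => //; case: (hW a).
rewrite exchange_big /= -q1; apply: eq_bigr => a _.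
by rewrite -mulr_sumr; case: (hW a) => _ ->; rewrite mulr1.
Qed.

Lemma joint_pmf (A B : finType) (QA : A -> R) (W : A -> B -> R) :
  is_pmf QA -> is_cpmf W -> is_pmf (fun ab : A * B => QA ab.1 * W ab.1 ab.2).
Proof.
move=> [q0 q1] hW; split.
  by move=> [a b]; apply: mulr_ge0 => //; case: (hW a).
rewrite sum_pair -q1; apply: eq_bigr => a _ /=.
by rewrite -mulr_sumr; case: (hW a) => _ ->; rewrite mulr1.
Qed.

Lemma MI_channel (A B : finType) (QA : A -> R) (W : A -> B -> R) :
  (forall a, 0 <= QA a) -> is_cpmf W ->
  MI (fun ab : A * B => QA ab.1 * W ab.1 ab.2) =
  \sum_ab QA ab.1 * W ab.1 ab.2
          * log2 (QA ab.1 * W ab.1 ab.2 / (QA ab.1 * \sum_a QA a * W a ab.2)).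
Proof.
move=> q0 hW; apply: (MI_eq (pA := QA) (pB := fun b => \sum_a QA a * W a b)).
- by move=> [a b]; rewrite mulr_ge0 ?(hW a).1.
- by move=> a /=; rewrite -mulr_sumr (hW a).2 mulr1.
- by [].
Qed.

Lemma MI_const_channel (A B : finType) (QA : A -> R) (V : B -> R) :
  is_pmf QA -> is_pmf V -> MI (fun ab : A * B => QA ab.1 * V ab.2) = 0.
Proof.
move=> [q0 q1] [v0 v1].
rewrite (@MI_eq _ _ _ QA V).
- rewrite big1 // => ab _; have [->|pn0] := eqVneq (QA ab.1 * V ab.2) 0.
    by rewrite mul0r.
  by rewrite divff // /log2 ln1 mul0r mulr0.
- by move=> [a b]; apply: mulr_ge0.
- by move=> a /=; rewrite -mulr_sumr v1 mulr1.
- by move=> b /=; rewrite -mulr_suml q1 mul1r.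
Qed.

Lemma MI0_indep (A B : finType) (QA : A -> R) (W : A -> B -> R) :
  is_pmf QA -> is_cpmf W -> MI (fun ab : A * B => QA ab.1 * W ab.1 ab.2) <= 0 ->
  forall a b, QA a * W a b = QA a * \sum_a' QA a' * W a' b.
Proof.
move=> hA hW HMI a b.
have hJ := joint_pmf hA hW.
have hJB := joint_pmf hA (fun _ => output_pmf hA hW).
apply: (gibbs_eq hJ hJB _ _ (a, b)) => [[a' b'] /= Jpos|].
  have [QApos _] := mul_gt0_factors (hA.1 a') ((hW a').1 b') Jpos.
  rewrite mulr_gt0 //; apply: (sum_gt0_term (t0 := a')) Jpos => a''.
  by rewrite mulr_ge0 ?hA.1 ?(hW a'').1.
by move: HMI; rewrite MI_channel //; exact: hA.1.
Qed.

(* Feeding two laws through the same channel leaves their divergence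
   unchanged (the channel only matters on the support of q). *)
Lemma KL_channel (A B : finType) (q p : A -> R) (W : A -> B -> R) :
  (forall a, 0 <= q a) -> (forall a b, 0 <= W a b) ->
  (forall a, 0 < q a -> \sum_b W a b = 1) ->
  KL (fun ab : A * B => q ab.1 * W ab.1 ab.2) (fun ab => p ab.1 * W ab.1 ab.2)
  = KL q p.
Proof.
move=> q0 W0 W1; have [/forallP qp|] := boolP [forall a, (p a == 0) ==> (q a == 0)].
  have {}qp a : p a = 0 -> q a = 0 by move/eqP => pa; apply/eqP; exact: implyP (qp a) pa.
  have qW0 (ab : A * B) : 0 <= q ab.1 * W ab.1 ab.2 by rewrite mulr_ge0.
  have qWp (ab : A * B) : p ab.1 * W ab.1 ab.2 = 0 -> q ab.1 * W ab.1 ab.2 = 0.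
    by move/eqP; rewrite mulf_eq0 => /orP[/eqP/qp -> | /eqP ->]; rewrite ?mul0r ?mulr0.
  rewrite KL_eq // KL_eq //; congr (_%:E); rewrite sum_pair; apply: eq_bigr => a _ /=.
  have [->|qn0] := eqVneq (q a) 0; first by rewrite mul0r big1 // => b _; rewrite !mul0r.
  have pn0 : p a != 0 by apply: contra qn0 => /eqP/qp ->.
  rewrite -[RHS]mulr1 -(W1 a) ?lt_def ?qn0 ?q0 // mulr_sumr; apply: eq_bigr => b _.
  have [->|Wn0] := eqVneq (W a b) 0; first by rewrite !(mulr0, mul0r).
  by rewrite [RHS]mulrAC; congr (_ * log2 _); field; rewrite pn0 Wn0.
move=> nac; rewrite /KL (negbTE nac) ifF //; apply/negbTE/forallPn.
move/forallPn: nac => [a]; rewrite negb_imply => /andP[/eqP pa qn0].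
have /existsP [b Wn0] : [exists b, W a b != 0].
  apply: contraT => /existsPn Wa0; move: (W1 a); rewrite lt_def qn0 q0 => /(_ isT).
  by rewrite big1 => [/eqP|b _]; [rewrite eq_sym oner_eq0 | exact/eqP/negPn].
exists (a, b) => /=.
by rewrite pa mul0r eqxx mulf_eq0 negb_or qn0 Wn0.
Qed.

Lemma KL_marg (A B : finType) (q p : A * B -> R) :
  (forall t, 0 <= q t) -> (forall t, 0 <= p t) ->
  (KL (fun a => (\sum_b q (a, b))%R) (fun a => (\sum_b p (a, b))%R) <= KL q p)%E.
Proof.
move=> q0 p0; rewrite [X in (_ <= X)%E]/KL.
case: ifPn => [/forallP qp | _]; last exact: leey.
have {}qp t : p t = 0 -> q t = 0.
  by move=> pt; move: (qp t); rewrite pt eqxx => /eqP.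
rewrite KL_eq; first last.
- move=> a pa; apply: big1 => b _; apply: qp.
  exact: (@psumr_eq0P _ _ xpredT (fun b => p (a, b)) (fun b _ => p0 _) pa b).
- by move=> a; apply: sumr_ge0.
rewrite lee_fin sum_support // sum_pair; apply: ler_sum => a _.
apply: log_sum => // b qab; rewrite lt_def p0 andbT.
by apply: contraTneq qab => /qp ->; rewrite ltxx.
Qed.

Lemma CMI_prod_input (A B U : finType) (QA : A -> R) (V : U -> R)
  (W : A * U -> B -> R) :
  is_pmf QA -> is_pmf V -> is_cpmf W ->
  CMI (fun t : A * B * U => QA t.1.1 * V t.2 * W (t.1.1, t.2) t.1.2)
  = \sum_u V u * MI (fun ab : A * B => QA ab.1 * W (ab.1, u) ab.2).
Proof.
move=> [q0 q1] [v0 _] hW.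
have W0 au b : 0 <= W au b by case: (hW au).
have W1 au : \sum_b W au b = 1 by case: (hW au).
pose out u b := \sum_a QA a * W (a, u) b.
rewrite (@CMI_eq _ _ _ _ V (fun a u => QA a * V u) (fun b u => V u * out u b)).
- rewrite sum_pair.
  under [RHS]eq_bigr do rewrite (MI_channel q0 (fun a => hW (a, _))) mulr_sumr.
  rewrite [RHS]exchange_big; apply: eq_bigr => -[a b] _; apply: eq_bigr => u _ /=.
  have e : QA a * V u * W (a, u) b = V u * (QA a * W (a, u) b) by ring.
  have [->|Vn0] := eqVneq (V u) 0; first by rewrite !(mulr0, mul0r).
  have [Z|Zn0] := eqVneq (QA a * W (a, u) b) 0.
    by rewrite e Z !(mulr0, mul0r).
  have [QAn0 Wn0] : QA a != 0 /\ W (a, u) b != 0.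
    by move: Zn0; rewrite mulf_eq0 negb_or => /andP.
  have out_pos : 0 < out u b.
    apply: (sum_gt0_term (t0 := a)); last by rewrite lt_def Zn0 mulr_ge0.
    by move=> a'; rewrite mulr_ge0.
  rewrite e -mulrA; congr (V u * (_ * log2 _)).
  by rewrite -/(out u b); field; rewrite QAn0 Vn0 lt0r_neq0.
- by move=> t; rewrite !mulr_ge0.
- move=> u /=; rewrite -[RHS]mul1r -q1 mulr_suml; apply: eq_bigr => a _.
  by rewrite -mulr_sumr W1 mulr1.
- by move=> a u /=; rewrite -mulr_sumr W1 mulr1.
- by move=> b u /=; rewrite /out mulr_sumr; apply: eq_bigr => a _; ring.
Qed.

Lemma MI_convex_channel (A B U : finType) (QA : A -> R) (V : U -> R)
  (W : A * U -> B -> R) :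
  is_pmf QA -> is_pmf V -> is_cpmf W ->
  MI (fun ab : A * B => QA ab.1 * \sum_u V u * W (ab.1, u) ab.2)
  <= \sum_u V u * MI (fun ab : A * B => QA ab.1 * W (ab.1, u) ab.2).
Proof.
move=> [q0 _] [v0 v1] hW.
have W0 au b : 0 <= W au b by case: (hW au).
pose Wm a b := \sum_u V u * W (a, u) b.
have hWm : is_cpmf Wm.
  move=> a; split => [b|]; first by apply: sumr_ge0 => u _; rewrite mulr_ge0.
  rewrite /Wm exchange_big /= -v1; apply: eq_bigr => u _.
  by rewrite -mulr_sumr (hW (a, u)).2 mulr1.
pose out u b := \sum_a QA a * W (a, u) b.
rewrite (MI_channel (W := Wm)) //.
under [X in _ <= X]eq_bigr do rewrite (MI_channel q0 (fun a => hW (a, _))) mulr_sumr.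
rewrite [X in _ <= X]exchange_big; apply: ler_sum => -[a b] _ /=.
have QAW0 u : 0 <= QA a * W (a, u) b by rewrite mulr_ge0.
have out_pos u : 0 < QA a * W (a, u) b -> 0 < QA a * out u b.
  move=> pos; have [QApos _] := mul_gt0_factors (q0 a) (W0 _ b) pos.
  by rewrite mulr_gt0 // (sum_gt0_term (t0 := a)) // => a'; rewrite mulr_ge0.
have input_sum : \sum_u V u * (QA a * W (a, u) b) = QA a * Wm a b.
  by rewrite mulr_sumr; apply: eq_bigr => u _; rewrite mulrCA.
have output_sum : \sum_u V u * (QA a * out u b) = QA a * \sum_a' QA a' * Wm a' b.
  under eq_bigr do rewrite mulrCA.
  rewrite -mulr_sumr /out; congr (_ * _); under eq_bigr do rewrite mulr_sumr.
  rewrite exchange_big; apply: eq_bigr => a' _ /=; rewrite /Wm mulr_sumr.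
  by apply: eq_bigr => u _; rewrite mulrCA.
rewrite -input_sum -output_sum; apply: log_sum_mix => // u.
by rewrite mulr_ge0 // sumr_ge0 // => a' _; rewrite mulr_ge0.
Qed.

End Information.

Section RateDistortion.
Variables (R : realType) (X Xh : finType) (d : X -> Xh -> R) (D : R).

Lemma RDc_prod_input (U : finType) (QX : X -> R) (V : U -> R) :
  is_pmf QX -> is_pmf V ->
  RDc d D (fun xu : X * U => QX xu.1 * V xu.2) = RD d D QX.
Proof.
move=> hX hV; have [v0 v1] := hV.
apply/eqP; rewrite eq_le; apply/andP; split.
- apply: le_ereal_inf_tmp => _ [W [hW hd] <-].
  apply: ge_ereal_inf; eexists.
    exists (fun xu : X * U => W xu.1) => //; split; first by move=> xu; exact: hW.
    apply: le_trans hd; rewrite le_eqVlt; apply/orP; left; apply/eqP.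
    apply: eq_bigr => x _; rewrite exchange_big /=; apply: eq_bigr => xh _.
    by rewrite -[RHS]mul1r -v1 !mulr_suml; apply: eq_bigr => u _; ring.
  by rewrite /= (CMI_prod_input (W := fun xu : X * U => W xu.1)) //= -mulr_suml v1 mul1r.
- apply: le_ereal_inf_tmp => _ [W [hW hd] <-].
  pose Wm x xh := \sum_u V u * W (x, u) xh.
  apply: ge_ereal_inf; eexists.
    exists Wm => //; split.
      move=> x; split => [xh|].
        by apply: sumr_ge0 => u _; rewrite mulr_ge0 ?(hW _).1.
      rewrite /Wm exchange_big /= -v1; apply: eq_bigr => u _.
      by rewrite -mulr_sumr (hW (x, u)).2 mulr1.
    apply: le_trans hd; rewrite le_eqVlt; apply/orP; left; apply/eqP.
    apply: eq_bigr => x _; rewrite exchange_big /=; apply: eq_bigr => xh _.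
    by rewrite /Wm !mulr_sumr mulr_suml; apply: eq_bigr => u _; ring.
  by rewrite /= lee_fin CMI_prod_input //; apply: MI_convex_channel.
Qed.

End RateDistortion.

Section SingleLetter.
Variables (R : realType) (X Y Xh : finType) (PXY : X * Y -> R).
Variables (d : X -> Xh -> R) (D rho : R).
Hypothesis hP : is_pmf PXY.

Definition objective (U : finType) (QY : Y -> R) (QUY : Y -> U -> R)
    (QXYU : Y * U -> X -> R) : \bar R :=
  (rho%:E * RDc d D (fun xu : X * U =>
                      (\sum_y QY y * QUY y xu.2 * QXYU (y, xu.2) xu.1)%R)
   - KL (fun t : X * Y * U => (QY t.1.2 * QUY t.1.2 t.2 * QXYU (t.1.2, t.2) t.1.1)%R)
        (fun t : X * Y * U => (PXY t.1 * QUY t.1.2 t.2)%R))%E.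

Definition single_letter (QX : X -> R) : \bar R :=
  (rho%:E * RD d D QX - KL QX (fun x => (\sum_y PXY (x, y))%R))%E.

Lemma objective_trivial_le (QY : Y -> R) (QXYU : Y * unit -> X -> R) :
  is_pmf QY -> is_cpmf QXYU ->
  (objective QY (fun _ _ => 1%R) QXYU
   <= single_letter (fun x => (\sum_y QY y * QXYU (y, tt) x)%R))%E.
Proof.
move=> hY hQ; pose QX x := \sum_y QY y * QXYU (y, tt) x.
have hX : is_pmf QX := output_pmf hY (fun y => hQ (y, tt)).
pose QXY (xy : X * Y) := QY xy.2 * QXYU (xy.2, tt) xy.1.
have QXY0 xy : 0 <= QXY xy by rewrite mulr_ge0 ?hY.1 ?(hQ _).1.
apply: leeB.
  rewrite -(RDc_prod_input d D hX (unit_pmf R)) le_eqVlt; apply/orP; left; apply/eqP.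
  congr (_ * RDc _ _ _)%E; apply/funext => -[x []] /=.
  by rewrite mulr1; apply: eq_bigr => y _; rewrite mulr1.
have -> : (fun t : X * Y * unit => QY t.1.2 * 1 * QXYU (t.1.2, t.2) t.1.1)
          = (fun t => QXY t.1 * (fun _ _ => 1) t.1 t.2).
  by apply/funext => -[[x y] []]; rewrite /QXY /= !mulr1.
rewrite (@KL_channel _ _ _ QXY PXY (fun _ _ => 1)) //; last first.
  by move=> xy _; rewrite sum_unit.
exact: (@KL_marg _ _ _ QXY PXY QXY0 hP.1).
Qed.

(* For a source law QX absolutely continuous with respect to P_X, the joint
   law Q_{XY} = QX P_{Y|X}, its Y-marginal and the backward channel Q_{X|Y}
   realise QX in the multi-letter expression. *)
Section Construction.
Variable QX : X -> R.
Hypotheses (hX : is_pmf QX) (hac : forall x, \sum_y PXY (x, y) = 0 -> QX x = 0).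

Definition Pcond (x : X) (y : Y) : R := PXY (x, y) / \sum_y' PXY (x, y').
Definition QXYt (x : X) (y : Y) : R := QX x * Pcond x y.
Definition QYt (y : Y) : R := \sum_x QXYt x y.
Definition backward (y : Y) : X -> R :=
  if 0 < QYt y then fun x => QXYt x y / QYt y else QX.

Lemma PX_ge0 x : 0 <= \sum_y PXY (x, y).
Proof. by apply: sumr_ge0 => y _; exact: hP.1. Qed.

Lemma Pcond_ge0 x y : 0 <= Pcond x y.
Proof. by rewrite divr_ge0 ?PX_ge0 ?hP.1. Qed.

Lemma Pcond_sum x : 0 < QX x -> \sum_y Pcond x y = 1.
Proof.
move=> QXpos; rewrite -mulr_suml divff //.
by apply: contraTneq QXpos => /hac ->; rewrite ltxx.
Qed.

Lemma PXY_factor x y : PXY (x, y) = (\sum_y' PXY (x, y')) * Pcond x y.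
Proof.
have [PX0|PXn0] := eqVneq (\sum_y' PXY (x, y')) 0; last by rewrite mulrC divfK.
rewrite PX0 mul0r.
exact: (@psumr_eq0P _ _ xpredT (fun y => PXY (x, y)) (fun _ _ => hP.1 _) PX0).
Qed.

Lemma QXYt_ge0 x y : 0 <= QXYt x y.
Proof. by rewrite mulr_ge0 ?hX.1 ?Pcond_ge0. Qed.

Lemma QXYt_sum x : \sum_y QXYt x y = QX x.
Proof.
have [QX0|QXn0] := eqVneq (QX x) 0.
  by rewrite QX0 big1 // => y _; rewrite /QXYt QX0 mul0r.
by rewrite -mulr_sumr Pcond_sum ?mulr1 // lt_def QXn0 hX.1.
Qed.

Lemma QYt_pmf : is_pmf QYt.
Proof.
split => [y|]; first by apply: sumr_ge0 => x _; exact: QXYt_ge0.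
by rewrite /QYt exchange_big /=; under eq_bigr do rewrite QXYt_sum; exact: hX.2.
Qed.

Lemma QYt_backward y x : QYt y * backward y x = QXYt x y.
Proof.
rewrite /backward; case: ifPn => [QYpos|QYnpos]; first by rewrite mulrC divfK ?lt0r_neq0.
have QY0 : QYt y = 0 by apply/eqP; rewrite eq_le leNgt QYnpos QYt_pmf.1.
rewrite QY0 mul0r.
by rewrite (@psumr_eq0P _ _ xpredT (fun x => QXYt x y) (fun _ _ => QXYt_ge0 _ _) QY0).
Qed.

Lemma backward_cpmf : is_cpmf backward.
Proof.
move=> y; rewrite /backward; case: ifPn => // QYpos; split => [x|].
  by rewrite divr_ge0 ?QXYt_ge0 ?QYt_pmf.1.
by rewrite -mulr_suml divff ?lt0r_neq0.
Qed.

Lemma objective_construction (U : finType) (QUY : Y -> U -> R) :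
  is_cpmf QUY ->
  (forall x u, \sum_y QUY y u * QXYt x y = QX x * \sum_y QYt y * QUY y u) ->
  objective QYt QUY (fun yu => backward yu.1) = single_letter QX.
Proof.
move=> hU hfac; have hV := output_pmf QYt_pmf hU.
rewrite /objective /single_letter; congr (rho%:E * _ - _)%E.
  rewrite -(RDc_prod_input d D hX hV); congr (RDc _ _ _); apply/funext => -[x u] /=.
  by rewrite -hfac; apply: eq_bigr => y _; rewrite mulrAC QYt_backward mulrC.
have -> : (fun t : X * Y * U => QYt t.1.2 * QUY t.1.2 t.2 * backward t.1.2 t.1.1)
          = (fun t => (fun xy : X * Y => QXYt xy.1 xy.2) t.1
                      * (fun xy u => QUY xy.2 u) t.1 t.2).
  by apply/funext => -[[x y] u] /=; rewrite mulrAC QYt_backward mulrC.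
rewrite (@KL_channel _ _ _ (fun xy => QXYt xy.1 xy.2) PXY (fun xy u => QUY xy.2 u));
  first last.
- by move=> [x y] _; exact: (hU y).2.
- by move=> [x y] u; exact: (hU y).1.
- by move=> [x y]; exact: QXYt_ge0.
rewrite -(@KL_channel _ _ _ QX (fun x => \sum_y' PXY (x, y')) Pcond); first last.
- exact: Pcond_sum.
- exact: Pcond_ge0.
- exact: hX.1.
by congr KL; apply/funext => -[x y]; rewrite PXY_factor.
Qed.

Lemma factor_of_MI0 (U : finType) (QUY : Y -> U -> R) :
  is_cpmf QUY -> MI (fun yu : Y * U => QYt yu.1 * QUY yu.1 yu.2) <= 0 ->
  forall x u, \sum_y QUY y u * QXYt x y = QX x * \sum_y QYt y * QUY y u.
Proof.
move=> hU hMI x u; have indep := MI0_indep QYt_pmf hU hMI.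
transitivity (\sum_y QYt y * QUY y u * backward y x).
  by apply: eq_bigr => y _; rewrite mulrAC QYt_backward mulrC.
under eq_bigr do rewrite indep.
rewrite -QXYt_sum mulr_suml; apply: eq_bigr => y _.
by rewrite -QYt_backward mulrAC.
Qed.

Lemma factor_of_indep (U : finType) (QUY : Y -> U -> R) :
  (forall x y, PXY (x, y) = (\sum_y' PXY (x, y')) * (\sum_x' PXY (x', y))) ->
  forall x u, \sum_y QUY y u * QXYt x y = QX x * \sum_y QYt y * QUY y u.
Proof.
move=> hind; pose PY y := \sum_x' PXY (x', y).
have QXY_prod x y : QXYt x y = QX x * PY y.
  rewrite /QXYt /Pcond; have [PX0|PXn0] := eqVneq (\sum_y' PXY (x, y')) 0.
    by rewrite hac // !mul0r.
  by rewrite hind mulrAC divff ?mul1r.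
have QY_PY y : QYt y = PY y.
  by rewrite /QYt; under eq_bigr do rewrite QXY_prod; rewrite -mulr_suml hX.2 mul1r.
move=> x u; rewrite mulr_sumr; apply: eq_bigr => y _.
by rewrite QXY_prod QY_PY; ring.
Qed.

End Construction.

Lemma single_letter_not_ac (QX : X -> R) :
  ~ (forall x, \sum_y PXY (x, y) = 0 -> QX x = 0) -> single_letter QX = -oo%E.
Proof.
move=> nac; rewrite /single_letter /KL ifF ?addeNy //; apply/negbTE/negP => /forallP ac.
by apply: nac => x PX0; apply/eqP; move: (ac x); rewrite PX0 eqxx.
Qed.

End SingleLetter.

Theorem mainTheorem4 (R : realType) (X Y Xh : finType)
  (PXY : X * Y -> R) (d : X -> Xh -> R) (D r rho : R) :
  is_pmf PXY ->
  (forall x xh, 0 <= d x xh) ->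
  0 < D -> 0 <= r -> 0 < rho ->
  (r = 0 \/
   forall x y, PXY (x, y) = (\sum_y' PXY (x, y')) * (\sum_x' PXY (x', y))) ->
  ereal_sup
    [set ereal_inf
       [set v : \bar R | exists (U : finType) (QUY : Y -> U -> R),
          [/\ is_cpmf QUY,
              MI (fun yu : Y * U => QY yu.1 * QUY yu.1 yu.2) <= r &
              v = ereal_sup
                [set (rho%:E *
                        RDc d D (fun xu : X * U =>
                          (\sum_y QY y * QUY y xu.2 * QXYU (y, xu.2) xu.1)%R)
                      - KL (fun t : X * Y * U =>
                              (QY t.1.2 * QUY t.1.2 t.2 * QXYU (t.1.2, t.2) t.1.1)%R)
                           (fun t : X * Y * U =>
                              (PXY t.1 * QUY t.1.2 t.2)%R))%E
                | QXYU in [set QXYU : Y * U -> X -> R | is_cpmf QXYU]]]]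
    | QY in [set QY : Y -> R | is_pmf QY]]
  =
  ereal_sup
    [set (rho%:E * RD d D QX - KL QX (fun x => (\sum_y PXY (x, y))%R))%E
    | QX in [set QX : X -> R | is_pmf QX]].
Proof.
move=> hP _ _ r_ge0 _ hcase; apply/eqP; rewrite eq_le; apply/andP; split.
- apply: ge_ereal_sup => _ [QY hY <-]; apply: ge_ereal_inf; eexists.
    exists unit, (fun _ _ => 1%R); split => //; first by move=> y; exact: unit_pmf.
    by rewrite (MI_const_channel hY (unit_pmf R)).
  apply: ge_ereal_sup => _ [QXYU hQ <-].
  apply: le_trans (objective_trivial_le d D rho hP hY hQ) _.
  apply: ereal_sup_ubound; exists (fun x => \sum_y QY y * QXYU (y, tt) x)%R => //.
  exact: output_pmf hY (fun y => hQ (y, tt)).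
- apply: ge_ereal_sup => _ [QX hX <-].
  have [hac|nac] := pselect (forall x, \sum_y PXY (x, y) = 0 -> QX x = 0); last first.
    rewrite -[X in (X <= _)%E]/(single_letter PXY d D rho QX).
    by rewrite single_letter_not_ac ?leNye.
  apply: le_ereal_sup_tmp; eexists; first by exists (QYt PXY QX) => //; exact: QYt_pmf.
  apply: le_ereal_inf_tmp => _ [U [QUY [hU hMI ->]]].
  apply: le_ereal_sup_tmp; eexists.
    by exists (fun yu => backward PXY QX yu.1) => // -[y u]; exact: backward_cpmf.
  have hfac : forall x u, \sum_y QUY y u * QXYt PXY QX x y
                          = QX x * \sum_y QYt PXY QX y * QUY y u.
    case: hcase => [r0|hind]; last exact: factor_of_indep.
    by apply: factor_of_MI0 => //; rewrite -r0.
  by have := objective_construction d D rho hP hX hac hU hfac; rewrite /objective => ->.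
Qed.
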